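(* (1) Let $R$ be one of the following graphs with a distinguished vertex $v$: a star $S_r$ with $r\ge 2$ leaves and center $v$; a healthy spider $S(0,r)$ with $r\ge2$ feet and head $v$; a cycle $C_n$ with $n\ge5$ and $v\in V(C_n)$ arbitrary; a path $P_n$ with $n\ge5$ and $v$ a support vertex of $P_n$. Let $H$ be a graph with no isolated vertices, $V(H)\cap V(R)=\emptyset$, and let $u\in V(H)$ be such that some $\gamma_{tR}(H)$-function $f$ satisfies $f(u)>0$ (and $f(u)=2$ in the case $R=S(0,r)$). Let $G$ be obtained from the disjoint union $H\cup R$ by adding $s$ edges, one of which is $uv$. Then $b_{tR}(G)\le s$. (2) If a graph $G$ (with no isolated vertices) has adjacent support vertices $u,v$ such that $v$ is adjacent to $r\ge2$ leaves, then $b_{tR}(G)\le \deg(v)-r$.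
   Context: A TRDF on $G=(V,E)$ is a function $f:V\to\{0,1,2\}$ such that every $v$ with $f(v)=0$ has a neighbor $u$ with $f(u)=2$ and the subgraph induced by $\{v:f(v)>0\}$ has no isolated vertices; $\gamma_{tR}(G)$ is its minimum weight, and a $\gamma_{tR}(G)$-function is a TRDF of weight $\gamma_{tR}(G)$. $b_{tR}(G)$ is the minimum $|E'|$ such that $G-E'$ has no isolated vertices and $\gamma_{tR}(G-E')>\gamma_{tR}(G)$ ($\infty$ if none). A leaf is a vertex of degree 1; a support vertex is a vertex adjacent to a leaf. The healthy spider $S(0,r)$ is the star $K_{1,r}$ with every edge subdivided once; its center is the head and the vertices at distance 2 from the head are the feet. *)

From mathcomp Require Import all_boot all_order.
Set Implicit Arguments.
Unset Strict Implicit.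
Unset Printing Implicit Defensive.

Section Graphs.
Variable V : finType.

Definition simple_graph (adj : rel V) : Prop := symmetric adj /\ irreflexive adj.

Definition no_isolated (adj : rel V) : bool := [forall x, [exists y, adj x y]].

Definition deg (adj : rel V) (x : V) : nat := #|[set y | adj x y]|.
Definition leaf (adj : rel V) (x : V) : bool := deg adj x == 1.
Definition support_vertex (adj : rel V) (x : V) : bool :=
  [exists y, adj x y && leaf adj y].

Definition TRDF (adj : rel V) (f : {ffun V -> 'I_3}) : bool :=
  [forall x, (f x == 0 :> nat) ==> [exists y, adj x y && (f y == 2 :> nat)]] &&
  [forall x, (0 < f x) ==> [exists y, adj x y && (0 < f y)]].

Definition weight (f : {ffun V -> 'I_3}) : nat := \sum_(x : V) (f x : nat).

(* minimum weight of a TRDF (the default 2|V| is the weight of f = 2,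
   a TRDF whenever there are no isolated vertices) *)
Definition gamma_tR (adj : rel V) : nat :=
  \big[minn/(2 * #|V|)]_(f : {ffun V -> 'I_3} | TRDF adj f) weight f.

Definition gamma_tR_function (adj : rel V) (f : {ffun V -> 'I_3}) : bool :=
  TRDF adj f && (weight f == gamma_tR adj).

Definition edges (adj : rel V) : {set {set V}} :=
  [set e | [exists x, [exists y, adj x y && (e == [set x; y])]]].

Definition delete_edges (adj : rel V) (E' : {set {set V}}) : rel V :=
  fun x y => adj x y && ([set x; y] \notin E').

Definition bondage_set (adj : rel V) (E' : {set {set V}}) : bool :=
  [&& E' \subset edges adj, no_isolated (delete_edges adj E')
    & gamma_tR adj < gamma_tR (delete_edges adj E')].

(* total Roman bondage number; None stands for infinity *)
Definition b_tR (adj : rel V) : option nat :=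
  if [exists E', bondage_set adj E'] then
    Some (\big[minn/#|edges adj|]_(E' | bondage_set adj E') #|E'|)
  else None.

(* b_tR(G) <= s  (false when b_tR(G) = infinity) *)
Definition b_tR_le (adj : rel V) (s : nat) : bool :=
  if b_tR adj is Some b then b <= s else false.

End Graphs.

Definition rooted_iso (TR M : finType) (adjR : rel TR) (v : TR)
    (adjM : rel M) (w : M) : Prop :=
  exists phi : TR -> M,
    [/\ bijective phi, phi v = w & forall x y, adjR x y = adjM (phi x) (phi y)].

Definition star_rel (r : nat) : rel 'I_r.+1 :=
  fun x y => (val x == 0) (+) (val y == 0).
(* healthy spider S(0,r): head 0, vertices 1..r, foot r+i adjacent to i *)
Definition spider_arc (r : nat) (x y : nat) : bool :=
  ((x == 0) && (1 <= y <= r)) || ((1 <= x <= r) && (y == x + r)).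
Definition spider_rel (r : nat) : rel 'I_(r.*2.+1) :=
  fun x y => spider_arc r x y || spider_arc r y x.
Definition cycle_rel (n : nat) : rel 'I_n :=
  fun x y => (val y == (val x).+1 %% n) || (val x == (val y).+1 %% n).
Definition path_rel (n : nat) : rel 'I_n :=
  fun x y => (val y == (val x).+1) || (val x == (val y).+1).

Arguments star_rel r : clear implicits.
Arguments spider_rel r : clear implicits.
Arguments cycle_rel n : clear implicits.
Arguments path_rel n : clear implicits.

Definition is_rooted_star (TR : finType) (adjR : rel TR) (v : TR) : Prop :=
  exists r, 2 <= r /\ rooted_iso adjR v (star_rel r) (@ord0 r).
Definition is_rooted_spider (TR : finType) (adjR : rel TR) (v : TR) : Prop :=
  exists r, 2 <= r /\ rooted_iso adjR v (spider_rel r) (@ord0 r.*2).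
Definition is_rooted_cycle (TR : finType) (adjR : rel TR) (v : TR) : Prop :=
  exists n, 5 <= n /\ exists w : 'I_n, rooted_iso adjR v (cycle_rel n) w.
Definition is_rooted_path (TR : finType) (adjR : rel TR) (v : TR) : Prop :=
  exists n, 5 <= n /\ exists w : 'I_n,
    support_vertex (path_rel n) w /\ rooted_iso adjR v (path_rel n) w.

Definition union_rel (TH TR : finType) (adjH : rel TH) (adjR : rel TR)
    : rel (TH + TR)%type :=
  fun x y => match x, y with
             | inl a, inl b => adjH a b
             | inr a, inr b => adjR a b
             | _, _ => false
             end.

Definition obtained_by_adding (TH TR : finType) (adjH : rel TH) (adjR : rel TR)
    (adjG : rel (TH + TR)%type) (s : nat) : Prop :=
  (forall x y, union_rel adjH adjR x y -> adjG x y) /\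
  #|edges adjG :\: edges (union_rel adjH adjR)| = s.

(* Part (1), for one family of rooted graphs R; need2 = the hypothesis
   f(u) = 2 is required instead of f(u) > 0 *)
Definition part1_for
    (is_R : forall TR : finType, rel TR -> TR -> Prop) (need2 : bool) : Prop :=
  forall (TH TR : finType) (adjH : rel TH) (adjR : rel TR) (v : TR) (u : TH)
         (adjG : rel (TH + TR)%type) (s : nat),
    simple_graph adjH -> no_isolated adjH ->
    simple_graph adjR -> is_R TR adjR v ->
    (exists f, gamma_tR_function adjH f /\
               (if need2 then (f u : nat) = 2 else 0 < f u)) ->
    simple_graph adjG -> obtained_by_adding adjH adjR adjG s ->
    adjG (inl u) (inr v) ->
    b_tR_le adjG s.

Definition part2 : Prop :=
  forall (V : finType) (adj : rel V) (u v : V),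
    simple_graph adj -> no_isolated adj ->
    adj u v -> support_vertex adj u -> support_vertex adj v ->
    2 <= #|[set x | adj v x && leaf adj x]| ->
    b_tR_le adj (deg adj v - #|[set x | adj v x && leaf adj x]|).

From mathcomp Require Import all_boot all_order zify.
From Stdlib Require Import FunctionalExtensionality.
Import Order.TTheory.

Set Implicit Arguments.
Unset Strict Implicit.
Unset Printing Implicit Defensive.

(* Both parts are exchange arguments against a deleted edge set.

   (2) Delete the edges from v to its non-leaf neighbours. Then v and its r >= 2
   leaves form a star component, on which every TRDF spends at least 3. In G the
   same function with 2 on v and 0 on its leaves is still a TRDF, v getting the
   positive neighbour u (positive because u is a support vertex), so gamma_tR
   strictly increases.

   (1) Delete the s added edges, leaving the disjoint union of H and R, whose
   gamma_tR is at least gamma_tR(H) + gamma_tR(R). In G, glue a gamma_tR(H)-function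
   f with f(u) > 0 (f(u) = 2 for the spider) to a function on R that violates the
   TRDF conditions only at v, where u repairs them. For each of the four rooted
   graphs such a function is lighter than every TRDF of R: 2 on the centre of a
   star (every TRDF weighs 3); 0 on the head and 1 elsewhere on a spider; 2 on v,
   0 on its two neighbours and 1 elsewhere on a cycle or path (n - 1 against the
   lower bound n, which holds whenever every vertex labelled 2 has degree at
   most 2 or only positive neighbours). *)

Lemma set2_eq (T : finType) (x y a b : T) : [set x; y] = [set a; b] ->
  (x = a /\ y = b) \/ (x = b /\ y = a).
Proof.
move=> E; have /set2P xab : x \in [set a; b] by rewrite -E set21.
have /set2P yab : y \in [set a; b] by rewrite -E set22.
have /set2P axy : a \in [set x; y] by rewrite E set21.
have /set2P bxy : b \in [set x; y] by rewrite E set22.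
by case: xab yab axy bxy => -> [] -> [] ? [] ?; subst; auto.
Qed.

Section TotalRomanDomination.
Variable V : finType.
Implicit Types (adj : rel V) (h : {ffun V -> 'I_3}).

Lemma TRDFP adj h : reflect
  (forall x, ((h x : nat) = 0 -> exists2 y, adj x y & (h y : nat) = 2) /\
             (0 < h x -> exists2 y, adj x y & 0 < h y))
  (TRDF adj h).
Proof.
apply: (iffP andP) => [[/forallP dom /forallP tot] x | hP].
  split=> [h0|hpos].
    by move: (dom x); rewrite h0 => /existsP[y /andP[xy /eqP hy]]; exists y.
  by move: (tot x); rewrite hpos => /existsP[y /andP[xy hy]]; exists y.
split; apply/forallP => x; apply/implyP.
  by move=> /eqP/(proj1 (hP x))[y xy hy]; apply/existsP; exists y; rewrite xy hy.
by move=> /(proj2 (hP x))[y xy hy]; apply/existsP; exists y; rewrite xy hy.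
Qed.

Lemma gamma_tR_le adj h : TRDF adj h -> gamma_tR adj <= weight h.
Proof. exact: (@bigmin_le_cond _ nat). Qed.

Lemma gamma_tR_ge adj k : no_isolated adj ->
  (forall h, TRDF adj h -> k <= weight h) -> k <= gamma_tR adj.
Proof.
move=> /forallP noiso lb; apply/(@bigmin_geP _ nat); split=> //.
pose two : {ffun V -> 'I_3} := [ffun=> ord_max].
have <- : weight two = 2 * #|V|.
  by rewrite /weight (eq_bigr (fun=> 2)) => [|x _]; rewrite ?ffunE // sum_nat_const mulnC.
apply: lb; apply/TRDFP => x; rewrite ffunE; split=> // _.
by case/existsP: (noiso x) => y xy; exists y; rewrite ?ffunE.
Qed.

Lemma b_tR_le_bondage_set adj E s : bondage_set adj E -> #|E| <= s -> b_tR_le adj s.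
Proof.
move=> bsE; rewrite /b_tR_le /b_tR.
have -> : [exists E', bondage_set adj E'] by apply/existsP; exists E.
exact/leq_trans/(@bigmin_le_cond _ nat).
Qed.

Lemma mem_edges adj x y : adj x y -> [set x; y] \in edges adj.
Proof.
by move=> xy; rewrite inE; apply/existsP; exists x; apply/existsP; exists y; rewrite xy eqxx.
Qed.

Lemma edges_adj adj x y : symmetric adj -> [set x; y] \in edges adj -> adj x y.
Proof.
move=> sym; rewrite inE => /existsP[a /existsP[b /andP[ab /eqP/set2_eq]]].
by case=> [[-> ->]|[-> ->]]; rewrite // sym.
Qed.

Lemma delete_edges_diff adj adjU : symmetric adjU -> subrel adjU adj ->
  delete_edges adj (edges adj :\: edges adjU) = adjU.
Proof.
move=> symU subU; apply: functional_extensionality => x.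
apply: functional_extensionality => y; rewrite /delete_edges in_setD negb_and negbK.
apply/idP/idP => [/andP[xy /orP[/(edges_adj symU)//|]]|xyU].
  by rewrite mem_edges.
by rewrite subU // mem_edges.
Qed.

Lemma leaf_nbr adj l s : leaf adj l -> adj l s -> forall y, adj l y -> y = s.
Proof.
move=> /cards1P[a Na] ls y ly.
have nbr z : adj l z -> z = a by move=> lz; apply/set1P; rewrite -Na inE.
by rewrite (nbr _ ly) (nbr _ ls).
Qed.

Lemma nonleaf_nbr adj x w :
  no_isolated adj -> ~~ leaf adj x -> exists2 y, adj x y & y != w.
Proof.
move=> /forallP noiso nleaf; have : 1 < deg adj x.
  case/existsP: (noiso x) => y xy; rewrite ltn_neqAle eq_sym nleaf /=.
  by apply/card_gt0P; exists y; rewrite inE.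
case/card_gt1P => a [b [+ + ab]]; rewrite !inE => xa xb.
by case: (eqVneq a w) => [aw|]; [exists b; rewrite // -aw eq_sym | exists a].
Qed.

Lemma TRDF_nbr_pos adj h l s : TRDF adj h -> (forall y, adj l y -> y = s) -> 0 < h s.
Proof.
move=> /TRDFP/(_ l)[dom tot] nbr_l.
by case: (posnP (h l)) => [/dom|/tot] [y /nbr_l-> ->].
Qed.

Lemma weight_add_card0 h :
  weight h + #|[set x | (h x : nat) == 0]| = #|V| + #|[set x | (h x : nat) == 2]|.
Proof.
have card_sum (P : pred V) : #|[set x | P x]| = \sum_x (P x : nat).
  by rewrite -sum1_card big_mkcond; apply: eq_bigr => x _; rewrite inE; case: (P x).
rewrite !card_sum -big_split -sum1_card -big_split /=.
by apply: eq_bigr => x _; case: (h x) => [[|[|[|k]]] ?].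
Qed.

Lemma weightD1 h (a : V) : weight h = h a + \sum_(x in [set~ a]) h x.
Proof. by rewrite /weight (bigD1 a) //=; congr (_ + _); apply: eq_bigl => x; rewrite !inE. Qed.

Lemma weight_two_zeros_one_two h (Z : {set V}) t :
  #|Z| = 2 -> (forall x, ((h x : nat) == 0) = (x \in Z)) ->
  (forall x, ((h x : nat) == 2) = (x == t)) -> weight h = #|V|.-1.
Proof.
move=> Z2 zeros twos; have := weight_add_card0 h.
have -> : [set x | (h x : nat) == 0] = Z by apply/setP => x; rewrite inE zeros.
have -> : [set x | (h x : nat) == 2] = [set t] by apply/setP => x; rewrite !inE twos.
by rewrite Z2 cards1; lia.
Qed.

Lemma card_le_weight adj h : symmetric adj -> TRDF adj h ->
  (forall y, (h y : nat) = 2 -> (forall a, adj y a -> 0 < h a) \/ deg adj y <= 2) ->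
  #|V| <= weight h.
Proof.
move=> sym hT twos; have /TRDFP hP := hT.
suff : #|[set x | (h x : nat) == 0]| <= #|[set x | (h x : nat) == 2]|.
  by have := weight_add_card0 h; lia.
pose m x := odflt x [pick y | adj x y && ((h y : nat) == 2)].
have mP x : (h x : nat) = 0 -> adj x (m x) /\ (h (m x) : nat) = 2.
  move=> hx; rewrite /m; case: pickP => [y /andP[xy /eqP hy] | none] //=.
  by case: (proj1 (hP x) hx) => y xy hy; move: (none y); rewrite xy hy eqxx.
rewrite -(@card_in_imset _ _ m).
  apply/subset_leq_card/subsetP => y /imsetP[x]; rewrite inE => /eqP/mP[_ hmx] ->.
  by rewrite inE hmx.
(* a 2 dominating two 0s still needs a third, positive, neighbour *)
move=> x1 x2; rewrite !inE => /eqP h1 /eqP h2 m12; apply/eqP/negPn/negP => x12.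
have [y1 hy] := mP _ h1; have [y2 _] := mP _ h2; rewrite m12 sym in y1; rewrite sym in y2.
rewrite m12 in hy; have [c yc hc] := proj2 (hP (m x2)) (ltac:(by rewrite hy)).
case: (twos _ hy) => [/(_ _ y1)|]; first by rewrite h1.
apply/negP; rewrite -ltnNge; apply/card_gt2P; exists x1, x2, c.
rewrite !inE y1 y2 yc x12.
by split=> //; split=> //; [apply: contraTneq hc => <- | apply: contraTneq hc => ->];
  rewrite ?h1 ?h2.
Qed.

Lemma TRDF_star_ge3 adj h v (L : {set V}) : TRDF adj h -> 1 < #|L| ->
  (forall l, l \in L -> forall y, adj l y -> y = v) -> (forall y, adj v y -> y \in L) ->
  3 <= h v + \sum_(l in L) h l.
Proof.
move=> hT L2 nbrL nbr_v; have /TRDFP hP := hT.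
have [l0 l0L] : exists l0, l0 \in L by apply/card_gt0P; lia.
have hv_pos : 0 < h v := TRDF_nbr_pos hT (nbrL _ l0L).
have [hv1|hv2] : (h v : nat) = 1 \/ (h v : nat) = 2 by have := ltn_ord (h v); lia.
  suff : #|L| <= \sum_(l in L) h l by lia.
  rewrite -sum1_card; apply: leq_sum => l lL; rewrite lt0n; apply/eqP.
  by move=> /(proj1 (hP l))[y /(nbrL _ lL)->]; rewrite hv1.
have [y /nbr_v yL hy] := proj2 (hP v) hv_pos.
suff : h y <= \sum_(l in L) h l by lia.
by rewrite (bigD1 y) //= leq_addr.
Qed.

End TotalRomanDomination.

Lemma TRDF_comp (T V : finType) (adjT : rel T) (adj : rel V) (phi : T -> V) h :
  (forall x y, adj (phi x) y -> exists2 z, adjT x z & y = phi z) ->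
  TRDF adj h -> TRDF adjT [ffun x => h (phi x)].
Proof.
move=> lift /TRDFP hP; apply/TRDFP => x; rewrite ffunE.
have [dom tot] := hP (phi x); split.
  by move=> /dom[y /lift[z xz ->] hz]; exists z; rewrite ?ffunE.
by move=> /tot[y /lift[z xz ->] hz]; exists z; rewrite ?ffunE.
Qed.

Lemma weight_comp (T V : finType) (phi : T -> V) (h : {ffun V -> 'I_3}) :
  bijective phi -> weight [ffun x => h (phi x)] = weight h.
Proof.
move=> phi_bij; rewrite /weight (reindex phi) /=; last exact: onW_bij.
by apply: eq_bigr => x _; rewrite ffunE.
Qed.

Lemma rooted_iso_trans (A B C : finType) (adjA : rel A) a (adjB : rel B) b
    (adjC : rel C) c :
  rooted_iso adjA a adjB b -> rooted_iso adjB b adjC c -> rooted_iso adjA a adjC c.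
Proof.
case=> phi [[psi phiK psiK] phi_a adjAB] [phi' [[psi' phiK' psiK'] phi'_b adjBC]].
exists (phi' \o phi); split => /=.
- by exists (psi \o psi') => x /=; rewrite ?phiK' ?phiK ?psiK ?psiK'.
- by rewrite phi_a phi'_b.
- by move=> x y; rewrite adjAB adjBC.
Qed.

Lemma deg_ord_le2 n (adj : rel 'I_n.+1) y p q :
  (forall a, adj y a -> a = p :> nat \/ a = q :> nat) -> deg adj y <= 2.
Proof.
move=> nbr; apply: (@leq_trans #|[set (inord p : 'I_n.+1); inord q]|); last first.
  by rewrite cards2; case: (_ != _).
apply/subset_leq_card/subsetP => a.
by rewrite !inE => /nbr[]<-; rewrite inord_val eqxx ?orbT.
Qed.

Definition ffun3 (T : finType) (F : T -> nat) : {ffun T -> 'I_3} :=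
  [ffun x => inord (F x)].

Lemma ffun3E (T : finType) (F : T -> nat) x : F x < 3 -> (ffun3 F x : nat) = F x.
Proof. by move=> Fx; rewrite ffunE inordK. Qed.

Section AdjacentSupportVertices.
Variables (V : finType) (adj : rel V) (u v : V).
Hypotheses (adj_simple : simple_graph adj) (noiso : no_isolated adj) (uv : adj u v)
  (u_support : support_vertex adj u).
Let L := [set x | adj v x && leaf adj x].
Let N := [set x | adj v x && ~~ leaf adj x].
Hypothesis L2 : 1 < #|L|.

Let sym : symmetric adj := proj1 adj_simple.
Let irr : irreflexive adj := proj2 adj_simple.
Let E := [set [set v; x] | x in N].
Let adj' := delete_edges adj E.

Let deg_split : deg adj v = #|L| + #|N|.
Proof.
rewrite /deg -(cardsID [set y | leaf adj y]); congr (_ + _); apply: eq_card => y.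
  by rewrite !inE.
by rewrite !inE andbC.
Qed.

Let card_removed : #|E| = #|N|.
Proof.
apply: card_in_imset => x y; rewrite !inE => /andP[vx _] /andP[vy _].
by case/set2_eq => [[_ //]|[yv _]]; move: vy; rewrite yv irr.
Qed.

Let adj'E x y :
  adj' x y = adj x y && ~~ (((x == v) && (y \in N)) || ((y == v) && (x \in N))).
Proof.
congr (_ && ~~ _); apply/imsetP/idP => [[z zN /set2_eq[[-> ->]|[-> ->]]]|].
- by rewrite eqxx zN.
- by rewrite eqxx zN orbT.
by case/orP => /andP[/eqP-> yN]; [exists y | exists x; rewrite // setUC].
Qed.

Let adj'_sub : subrel adj' adj.
Proof. by move=> x y /andP[]. Qed.

Let L_nbr l y : l \in L -> adj l y -> y = v.
Proof.
rewrite inE => /andP[vl l_leaf] ly.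
by apply: (leaf_nbr l_leaf) ly; rewrite sym.
Qed.

Let L_neq_v x : x \in L -> x != v.
Proof. by rewrite inE => /andP[vx _]; apply: contraTneq vx => ->; rewrite irr. Qed.

Let adj'_v y : adj' v y = (y \in L).
Proof.
by rewrite adj'E eqxx !inE irr andbF orbF; case: (adj v y); rewrite //= negbK.
Qed.

Let no_isolated_removed : no_isolated adj'.
Proof.
apply/forallP => x; apply/existsP; case: (eqVneq x v) => [->|xv].
  have /card_gt0P[l lL] : 0 < #|L| by lia.
  by exists l; rewrite adj'_v.
have /forallP/(_ x)/existsP[y xy] := noiso.
case: (boolP (x \in N)) => [|xN].
  rewrite inE => /andP[_ /(nonleaf_nbr v noiso)[z xz zv]].
  by exists z; rewrite adj'E xz (negbTE xv) (negbTE zv).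
by exists y; rewrite adj'E xy (negbTE xv) (negbTE xN) andbF.
Qed.

Let S := v |: L.

Let S_closed x y : x \notin S -> adj' x y -> y \notin S.
Proof.
rewrite !in_setU1 negb_or => /andP[xv xL] xy; apply/negP => /orP[/eqP yv|yL].
  move: xy xL; rewrite adj'E yv eqxx (negbTE xv) /= !inE sym.
  by case: (adj v x); rewrite //= negbK => ->.
by move: xv; rewrite (L_nbr yL (_ : adj y x)) ?eqxx // sym; apply: adj'_sub.
Qed.

Let weight_split (h : {ffun V -> 'I_3}) :
  weight h = h v + \sum_(x in L) h x + \sum_(x | x \notin S) h x.
Proof.
rewrite /weight (bigID (mem S)) /= big_setU1 //=.
by rewrite inE irr.
Qed.

Let reroot (g : {ffun V -> 'I_3}) : {ffun V -> 'I_3} :=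
  [ffun x => if x == v then ord_max else if x \in L then ord0 else g x].

Let reroot_out g x : x \notin S -> reroot g x = g x.
Proof. by rewrite in_setU1 negb_or ffunE => /andP[/negbTE-> /negbTE->]. Qed.

Let weight_reroot g : TRDF adj' g -> weight (reroot g) < weight g.
Proof.
move=> gT; rewrite !weight_split.
have -> : \sum_(x | x \notin S) (reroot g x : nat) = \sum_(x | x \notin S) (g x : nat).
  by apply: eq_bigr => x /reroot_out->.
have -> : \sum_(x in L) (reroot g x : nat) = 0.
  by apply: big1 => x xL; rewrite ffunE xL (negbTE (L_neq_v xL)).
have star : 3 <= g v + \sum_(x in L) g x.
  apply: TRDF_star_ge3 gT L2 _ _ => [l lL y /adj'_sub|y]; first exact: L_nbr.
  by rewrite adj'_v.
by rewrite ffunE eqxx /=; lia.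
Qed.

Let u_notin_S : u \notin S.
Proof.
rewrite in_setU1 inE negb_or sym uv /=; apply/andP; split.
  by apply: contraTneq uv => ->; rewrite irr.
apply/negP => u_leaf; have /existsP[l /andP[ul l_leaf]] := u_support.
have v_leaf : leaf adj v by rewrite -(leaf_nbr u_leaf uv ul).
by move: v_leaf L2; rewrite /leaf deg_split; lia.
Qed.

Let TRDF_reroot g : TRDF adj' g -> TRDF adj (reroot g).
Proof.
move=> gT; have /TRDFP gP := gT; apply/TRDFP => x; case: (eqVneq x v) => [->|xv].
  rewrite ffunE eqxx; split=> // _; exists u; first by rewrite sym.
  rewrite reroot_out ?u_notin_S //; have /existsP[l /andP[ul l_leaf]] := u_support.
  by apply: (TRDF_nbr_pos gT) => y /adj'_sub; apply: (leaf_nbr l_leaf); rewrite sym.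
case: (boolP (x \in L)) => xL.
  rewrite ffunE (negbTE xv) xL; split=> // _; exists v; last by rewrite ffunE eqxx.
  by move: xL; rewrite inE sym => /andP[].
have xS : x \notin S by rewrite in_setU1 negb_or xv.
rewrite reroot_out //; have [dom tot] := gP x; split.
  move=> /dom[y xy gy]; exists y; first exact: adj'_sub.
  by rewrite reroot_out // (S_closed xS xy).
move=> /tot[y xy gy]; exists y; first exact: adj'_sub.
by rewrite reroot_out // (S_closed xS xy).
Qed.

Lemma bondage_removed_edges : b_tR_le adj (deg adj v - #|L|).
Proof.
apply: (@b_tR_le_bondage_set _ _ E); last by rewrite card_removed deg_split addKn.
apply/and3P; split.
- apply/subsetP => e /imsetP[x]; rewrite inE => /andP[vx _] ->; exact: mem_edges.
- exact: no_isolated_removed.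
- apply: gamma_tR_ge no_isolated_removed _ => g gT.
  exact: leq_ltn_trans (gamma_tR_le (TRDF_reroot gT)) (weight_reroot gT).
Qed.

End AdjacentSupportVertices.

Section DisjointUnion.
Variables (TH TR : finType) (adjH : rel TH) (adjR : rel TR).

Lemma symmetric_union : symmetric adjH -> symmetric adjR ->
  symmetric (union_rel adjH adjR).
Proof. by move=> symH symR [a|a] [b|b] //=; rewrite ?symH ?symR. Qed.

Lemma no_isolated_union : no_isolated adjH -> no_isolated adjR ->
  no_isolated (union_rel adjH adjR).
Proof.
move=> /forallP noH /forallP noR; apply/forallP => -[a|a].
  by case/existsP: (noH a) => b ab; apply/existsP; exists (inl b).
by case/existsP: (noR a) => b ab; apply/existsP; exists (inr b).
Qed.

Lemma weight_union (h : {ffun (TH + TR)%type -> 'I_3}) :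
  weight h = weight [ffun a => h (inl a)] + weight [ffun b => h (inr b)].
Proof.
by rewrite /weight big_sumType; congr (_ + _); apply: eq_bigr => x _; rewrite ffunE.
Qed.

Lemma gamma_tR_union : no_isolated adjH -> no_isolated adjR ->
  gamma_tR adjH + gamma_tR adjR <= gamma_tR (union_rel adjH adjR).
Proof.
move=> noH noR; apply: gamma_tR_ge (no_isolated_union noH noR) _ => h hT.
rewrite weight_union; apply: leq_add; apply: gamma_tR_le; apply: TRDF_comp hT.
  by move=> a [b|b] //= ab; exists b.
by move=> a [b|b] //= ab; exists b.
Qed.

End DisjointUnion.

(* [g] satisfies the TRDF conditions except at [v], whose missing neighbour is to be
   supplied by an outside neighbour [u] with [f u > 0], and [f u = 2] when [need2]. *)
Definition TRDF_at (T : finType) (adj : rel T) (v : T) (need2 : bool)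
    (g : {ffun T -> 'I_3}) : Prop :=
  forall x,
    ((g x : nat) = 0 -> (exists2 y, adj x y & (g y : nat) = 2) \/ (need2 /\ x = v)) /\
    (0 < g x -> (exists2 y, adj x y & 0 < g y) \/ x = v).

Definition lighter_at (T : finType) (adj : rel T) (v : T) (need2 : bool) : Prop :=
  no_isolated adj /\
  exists2 g, TRDF_at adj v need2 g & forall h, TRDF adj h -> weight g < weight h.

Definition glue (TH TR : finType) (f : {ffun TH -> 'I_3}) (g : {ffun TR -> 'I_3}) :
  {ffun (TH + TR)%type -> 'I_3} :=
  [ffun z => match z with inl a => f a | inr b => g b end].

Lemma weight_glue (TH TR : finType) (f : {ffun TH -> 'I_3}) (g : {ffun TR -> 'I_3}) :
  weight (glue f g) = weight f + weight g.
Proof.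
by rewrite weight_union; congr (_ + _); congr weight; apply/ffunP => x; rewrite !ffunE.
Qed.

Lemma TRDF_glue (TH TR : finType) (adjH : rel TH) (adjR : rel TR)
    (adjG : rel (TH + TR)%type) u v need2 f g :
  symmetric adjG -> subrel (union_rel adjH adjR) adjG -> adjG (inl u) (inr v) ->
  TRDF adjH f -> (if need2 then (f u : nat) = 2 else 0 < f u) ->
  TRDF_at adjR v need2 g -> TRDF adjG (glue f g).
Proof.
move=> symG subG uv /TRDFP fP fu gP; have fu_pos : 0 < f u by case: (need2) fu => // ->.
apply/TRDFP => -[a|b]; rewrite ffunE.
  have [dom tot] := fP a; split.
    by move=> /dom[y ay fy]; exists (inl y); rewrite ?ffunE //; apply: subG.
  by move=> /tot[y ay fy]; exists (inl y); rewrite ?ffunE //; apply: subG.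
have [dom tot] := gP b; split.
  move=> /dom[[y bz gy]|[n2 ->]]; first by exists (inr y); rewrite ?ffunE //; apply: subG.
  by exists (inl u); rewrite ?ffunE 1?symG //; move: fu; rewrite n2.
move=> /tot[[y bz gy]|->]; first by exists (inr y); rewrite ?ffunE //; apply: subG.
by exists (inl u); rewrite ?ffunE 1?symG.
Qed.

Lemma part1_of_lighter (is_R : forall TR : finType, rel TR -> TR -> Prop) need2 :
  (forall (TR : finType) (adjR : rel TR) v, is_R TR adjR v -> lighter_at adjR v need2) ->
  part1_for is_R need2.
Proof.
move=> lighter TH TR adjH adjR v u adjG s [symH _] noH [symR _] Rv
  [f [/andP[fT /eqP wf] fu]] [symG _] [subG cardE] uv.
have [noR [g gT g_light]] := lighter _ _ _ Rv.
apply: (@b_tR_le_bondage_set _ _ (edges adjG :\: edges (union_rel adjH adjR))).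
  rewrite /bondage_set delete_edges_diff //; last exact: symmetric_union.
  apply/and3P; split.
  - exact: subsetDl.
  - exact: no_isolated_union.
  - have gR : weight g < gamma_tR adjR by apply: gamma_tR_ge.
    apply: leq_ltn_trans (gamma_tR_le (TRDF_glue symG subG uv fT fu gT)) _.
    rewrite weight_glue wf; apply: leq_trans (gamma_tR_union noH noR).
    by rewrite ltn_add2l.
by rewrite cardE.
Qed.

Lemma lighter_at_iso (TR M : finType) (adjR : rel TR) v (adjM : rel M) w need2 :
  rooted_iso adjR v adjM w -> lighter_at adjM w need2 -> lighter_at adjR v need2.
Proof.
case=> phi [[psi phiK psiK] phi_v adjE] [/forallP noM [g gT g_light]]; split.
  apply/forallP => x; case/existsP: (noM (phi x)) => m xm.
  by apply/existsP; exists (psi m); rewrite adjE psiK.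
exists [ffun x => g (phi x)].
  move=> x; rewrite ffunE; have [dom tot] := gT (phi x); split.
    case/dom => [[m xm gm]|[n2 vx]]; last by right; split=> //; apply: (can_inj phiK); rewrite vx.
    by left; exists (psi m); rewrite ?ffunE ?adjE psiK.
  case/tot => [[m xm gm]|vx]; last by right; apply: (can_inj phiK); rewrite vx.
  by left; exists (psi m); rewrite ?ffunE ?adjE psiK.
move=> h hT; rewrite weight_comp; last by exists psi.
have -> : weight h = weight [ffun m => h (psi m)] by rewrite weight_comp //; exists phi.
apply/g_light/(TRDF_comp _ hT) => m x; rewrite adjE psiK => mx.
by exists (phi x); rewrite ?phiK.
Qed.

Lemma lighter_at_deg2 (T : finType) (adj : rel T) v a b :
  simple_graph adj -> no_isolated adj -> (forall x, deg adj x <= 2) ->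
  adj v a -> adj v b -> a != b ->
  (forall x, x != v -> x != a -> x != b -> exists2 y, adj x y & (y != a) && (y != b)) ->
  lighter_at adj v false.
Proof.
move=> [sym irr] noiso deg2 va vb ab far; split=> //.
have av : a != v by apply: contraTneq va => ->; rewrite irr.
have bv : b != v by apply: contraTneq vb => ->; rewrite irr.
pose F x := if x == v then 2 else if (x == a) || (x == b) then 0 else 1.
have gE x : ffun3 F x = F x :> nat by rewrite ffun3E /F; do ?case: ifP.
exists (ffun3 F).
  move=> x; rewrite gE [F x]/F; case: eqVneq => [->|xv]; first by split=> // _; right.
  case: ifP => [xab|nab]; split=> // _; left.
    by exists v; rewrite ?gE /F ?eqxx // sym; case/orP: xab => /eqP->.
  move/negbT: nab; rewrite negb_or => /andP[xa xb]; have [y xy /andP[ya yb]] := far x xv xa xb.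
  by exists y; rewrite // gE /F (negbTE ya) (negbTE yb); case: ifP.
move=> h hT; rewrite (@weight_two_zeros_one_two _ _ [set a; b] v).
- have T0 : 0 < #|T| by apply/card_gt0P; exists v.
  by rewrite prednK //; apply: card_le_weight => // y _; right.
- by rewrite cards2 ab.
- move=> x; rewrite gE /F !inE; case: (eqVneq x v) => [->|_]; last by case: ifP.
  by apply/esym/norP; rewrite !(eq_sym v).
- by move=> x; rewrite gE /F; case: ifP => //; case: ifP.
Qed.

Lemma lighter_star r : 1 < r -> lighter_at (star_rel r) ord0 false.
Proof.
move=> r2; have leafE (x y : 'I_r.+1) : x != ord0 -> star_rel r x y = (y == ord0).
  by rewrite /star_rel -!val_eqE /= => /negbTE->.
split.
  apply/forallP => x; apply/existsP; case: (eqVneq x ord0) => [->|x0].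
    by exists (inord 1); rewrite /star_rel /= inordK //; lia.
  by exists ord0; rewrite leafE.
exists (ffun3 (fun m : 'I_r.+1 => if m == ord0 then 2 else 0)).
  move=> x; rewrite ffun3E; last by case: ifP.
  case: (eqVneq x ord0) => [->|x0] /=; first by split=> // _; right.
  by split=> // _; left; exists ord0; rewrite ?leafE ?ffun3E ?eqxx.
move=> h hT; have L2 : 1 < #|[set~ (@ord0 r)]| by rewrite cardsC1 card_ord.
have star3 : 3 <= h ord0 + \sum_(x in [set~ ord0]) h x.
  apply: TRDF_star_ge3 hT L2 _ _ => [l|y]; rewrite in_setC1.
    by move=> l0 y; rewrite leafE // => /eqP.
  by rewrite /star_rel -val_eqE.
rewrite (weightD1 _ ord0) (weightD1 h ord0) ffun3E ?eqxx // big1 => [|x]; first lia.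
by rewrite in_setC1 => /negbTE x0; rewrite ffun3E x0.
Qed.

Lemma lighter_spider r : 1 < r -> lighter_at (spider_rel r) ord0 true.
Proof.
move=> r2; have adjE (x y : 'I_r.*2.+1) : spider_rel r x y =
    [|| (x == 0 :> nat) && (1 <= y <= r), (1 <= x <= r) && (y == x + r :> nat),
        (y == 0 :> nat) && (1 <= x <= r) | (1 <= y <= r) && (x == y + r :> nat)].
  by rewrite /spider_rel /spider_arc -!orbA.
have nbr_nonhead (y : 'I_r.*2.+1) : exists2 z : 'I_r.*2.+1, spider_rel r y z & (z : nat) != 0.
  have := ltn_ord y; case: (leqP y r) => yr yn.
    by exists (inord (y + r)); rewrite ?adjE inordK; lia.
  by exists (inord (y - r)); rewrite ?adjE inordK; lia.
split.
  by apply/forallP => x; apply/existsP; have [z xz _] := nbr_nonhead x; exists z.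
exists (ffun3 (fun m : 'I_r.*2.+1 => if m == ord0 then 0 else 1)).
  move=> x; rewrite ffun3E; last by case: ifP.
  case: (eqVneq x ord0) => [->|x0] /=; first by split=> // _; right.
  split=> // _; left; have [z xz z0] := nbr_nonhead x; exists z; rewrite // ffun3E.
    by rewrite -val_eqE /= (negbTE z0).
  by case: ifP.
move=> h hT; apply: leq_trans (card_le_weight _ hT _).
- rewrite (weightD1 _ ord0) ffun3E ?eqxx // (eq_bigr (fun=> 1)) => [|x].
    by rewrite sum1_card cardsC1 card_ord.
  by rewrite in_setC1 => /negbTE x0; rewrite ffun3E x0.
- by move=> x y; rewrite /spider_rel orbC.
move=> y _; case: (eqVneq y ord0) => [->|]; [left => a | rewrite -val_eqE /= => y0; right].
  (* the middle vertex [a] is the only neighbour of its foot [a + r] *)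
  rewrite adjE /= => ar; apply: (TRDF_nbr_pos hT (l := inord (a + r))) => z.
  rewrite adjE inordK => [az|]; last by have := ltn_ord a; lia.
  by apply: ord_inj; move: az; have := ltn_ord a; lia.
apply: (@deg_ord_le2 _ _ _ (if y <= r then 0 else y - r) (if y <= r then y + r else y - r)).
by move=> a; have := ltn_ord y; rewrite adjE; case: (leqP y r); lia.
Qed.

Lemma cycle_relP n (x y : 'I_n) : cycle_rel n x y =
  [|| (y == x.+1 :> nat), (y == 0 :> nat) && (x.+1 == n),
      (x == y.+1 :> nat) | (x == 0 :> nat) && (y.+1 == n)].
Proof.
have modS (z : 'I_n) : z.+1 %% n = if z.+1 == n then 0 else z.+1.
  case: eqP => [->|zn]; first exact: modnn.
  by rewrite modn_small // ltn_neqAle (ltn_ord z) andbT; apply/eqP.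
rewrite /cycle_rel /= !modS; have := ltn_ord x; have := ltn_ord y.
by case: (x.+1 =P n) => ?; case: (y.+1 =P n) => ?; lia.
Qed.

Lemma lighter_cycle0 n : 3 < n -> lighter_at (cycle_rel n.+1) ord0 false.
Proof.
move=> n4; apply: (@lighter_at_deg2 _ _ _ (inord 1) ord_max).
- by split=> [x y|x]; [rewrite /cycle_rel orbC | rewrite cycle_relP; lia].
- apply/forallP => x; apply/existsP; exists (inord (x.+1 %% n.+1)).
  by rewrite /cycle_rel /= inordK ?eqxx // ltn_pmod.
- move=> y; apply: (@deg_ord_le2 _ _ _ (if y == n :> nat then 0 else y.+1)
    (if y == 0 :> nat then n else y.-1)) => a.
  rewrite cycle_relP; have := ltn_ord a; have := ltn_ord y.
  by case: ifP => /eqP ?; case: ifP => /eqP ?; lia.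
- by rewrite cycle_relP /= inordK //; lia.
- by rewrite cycle_relP /=; lia.
- by rewrite -val_eqE /= inordK //; lia.
move=> x; rewrite -!val_eqE /= inordK; last lia.
move=> x0 x1 xn; have := ltn_ord x.
by case: (ltnP x n.-1) => xn'; [exists (inord x.+1) | exists (inord x.-1)];
  rewrite ?cycle_relP -?val_eqE /= !inordK //; lia.
Qed.

Definition rot n (k : nat) (x : 'I_n.+1) : 'I_n.+1 := inord ((x + k) %% n.+1).

Lemma rotE n k (x : 'I_n.+1) : rot k x = (x + k) %% n.+1 :> nat.
Proof. by rewrite inordK // ltn_pmod. Qed.

Lemma rotK n a b : a + b = n.+1 -> cancel (@rot n b) (@rot n a).
Proof.
move=> ab x; apply: ord_inj; rewrite !rotE modnDml -addnA (addnC b) ab.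
by rewrite modnDr modn_small.
Qed.

Lemma cycle_rel_rot n k : {mono @rot n k : x y / cycle_rel n.+1 x y}.
Proof.
have step (x y : 'I_n.+1) :
    (y == x.+1 %% n.+1 :> nat) = (rot k y == (rot k x).+1 %% n.+1 :> nat).
  rewrite !rotE -[((x + k) %% n.+1).+1]addn1 modnDml addnAC addn1 eqn_modDr.
  by rewrite (modn_small (ltn_ord y)).
by move=> x y; rewrite /cycle_rel /= -!step.
Qed.

Lemma rooted_iso_cycle_rot n (w : 'I_n.+1) :
  rooted_iso (cycle_rel n.+1) w (cycle_rel n.+1) ord0.
Proof.
have := ltn_ord w; exists (rot (n.+1 - w)); split.
- by exists (rot w); apply: rotK; lia.
- by apply: ord_inj; rewrite rotE subnKC ?modnn //; lia.
- by move=> x y; rewrite cycle_rel_rot.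
Qed.

Lemma lighter_cycle (TR : finType) (adjR : rel TR) v :
  is_rooted_cycle adjR v -> lighter_at adjR v false.
Proof.
case=> [[|n] [n5 [w iso]]] //.
apply: lighter_at_iso (rooted_iso_trans iso (rooted_iso_cycle_rot w)) _.
by apply: lighter_cycle0; lia.
Qed.

Lemma lighter_path1 n : 3 < n -> lighter_at (path_rel n.+1) (inord 1) false.
Proof.
move=> n4; apply: (@lighter_at_deg2 _ _ _ ord0 (inord 2)).
- by split=> [x y|x]; [rewrite /path_rel orbC | rewrite /path_rel /=; lia].
- apply/forallP => x; apply/existsP; have := ltn_ord x; case: (ltnP x n) => xn xlt.
    by exists (inord x.+1); rewrite /path_rel /= inordK; lia.
  by exists (inord x.-1); rewrite /path_rel /= inordK; lia.
- by move=> y; apply: (@deg_ord_le2 _ _ _ y.+1 y.-1) => a; rewrite /path_rel /=; lia.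
- by rewrite /path_rel /= inordK //; lia.
- by rewrite /path_rel /= !inordK //; lia.
- by rewrite -val_eqE /= inordK //; lia.
move=> x; rewrite -!val_eqE /= !inordK; try lia.
move=> x1 x0 x2; have := ltn_ord x.
by case: (ltnP x n) => xn; [exists (inord x.+1) | exists (inord x.-1)];
  rewrite /path_rel -?val_eqE /= !inordK //; lia.
Qed.

Lemma path_support n (w : 'I_n.+1) : 1 < n -> support_vertex (path_rel n.+1) w ->
  w = 1 :> nat \/ w = n.-1 :> nat.
Proof.
move=> n2 /existsP[y /andP[wy y_leaf]]; have := ltn_ord y; have := ltn_ord w.
suff : y = 0 :> nat \/ y = n :> nat by move: wy; rewrite /path_rel /=; lia.
case: (posnP y) => [|y0]; [by left | right]; apply/eqP/negP => yn.
have : 1 < deg (path_rel n.+1) y; last by rewrite (eqP y_leaf).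
apply/card_gt1P; exists (inord y.-1), (inord y.+1); rewrite !inE /path_rel /=.
have yn' : y < n by have := ltn_ord y; lia.
by rewrite -val_eqE /= !inordK; try split; lia.
Qed.

Lemma lighter_path (TR : finType) (adjR : rel TR) v :
  is_rooted_path adjR v -> lighter_at adjR v false.
Proof.
case=> [[|n] [n5 [w [w_support iso]]]] //; have n4 : 3 < n by lia.
have [w1|wn] := path_support (ltnW (ltnW n4)) w_support.
  have w_eq : w = inord 1 by apply: ord_inj; rewrite inordK //; lia.
  by rewrite w_eq in iso; apply: lighter_at_iso iso (lighter_path1 n4).
apply: lighter_at_iso (rooted_iso_trans iso _) (lighter_path1 n4).
exists (@rev_ord n.+1); split.
- by exists (@rev_ord n.+1) => x; rewrite rev_ordK.
- by apply: ord_inj; rewrite /= inordK; lia.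
- by move=> x y; rewrite /path_rel /=; have := ltn_ord x; have := ltn_ord y; lia.
Qed.

Theorem mainTheorem9 :
  [/\ part1_for is_rooted_star false,
      part1_for is_rooted_spider true,
      part1_for is_rooted_cycle false,
      part1_for is_rooted_path false
    & part2].
Proof.
split.
- apply: part1_of_lighter => TR adjR v [r [r2 iso]].
  exact: lighter_at_iso iso (lighter_star r2).
- apply: part1_of_lighter => TR adjR v [r [r2 iso]].
  exact: lighter_at_iso iso (lighter_spider r2).
- exact: part1_of_lighter lighter_cycle.
- exact: part1_of_lighter lighter_path.
(* [v] being a support vertex already follows from its two leaves *)
move=> V adj u v simple noiso uv u_support _ L2.
exact: bondage_removed_edges simple noiso uv u_support L2.
Qed.
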